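(* Let $M$ be a non-negative $n\times n$ matrix having at least one positive diagonal, and for $\lambda>0$ let $M^{(\lambda)}$ be the limit of Sinkhorn scaling of $M^{[\lambda]}$ with uniform marginals $\mathbf{r}=\mathbf{c}=(1/n,\dots,1/n)$. Then $M^{(\lambda)}$ concentrates on the leading diagonals of $M$ as $\lambda\to\infty$: for every position $(s,t)$ such that $M_{st}$ does not lie on any leading diagonal of $M$ (i.e. there is no leading diagonal $D^M_\sigma$ with $\sigma(s)=t$), $M^{(\lambda)}_{st}\to0$ as $\lambda\to\infty$.
   Context: $M^{[\lambda]}$ denotes the matrix with entries $(M_{ij})^\lambda$ (zero where $M_{ij}=0$). Sinkhorn scaling with marginals $(\mathbf{r},\mathbf{c})$ is the iterated alternation of rescaling rows to have sums $\mathbf{r}$ and columns to have sums $\mathbf{c}$. For a permutation $\sigma$ of $\{1,\dots,n\}$, the diagonal of $M$ determined by $\sigma$ is $D^M_\sigma=\{M_{1\sigma(1)},\dots,M_{n\sigma(n)}\}$; it is positive if all its entries are positive; it is a leading diagonal if the product $\prod_{i=1}^n M_{i\sigma(i)}$ is the largest among all diagonals of $M$. *)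

From HB Require Import structures.
From mathcomp Require Import all_boot all_order all_algebra all_fingroup.
From mathcomp Require Import all_classical all_reals all_analysis.
Set Implicit Arguments. Unset Strict Implicit. Unset Printing Implicit Defensive.
Import Order.TTheory GRing.Theory Num.Theory numFieldNormedType.Exports.
Local Open Scope classical_set_scope.
Local Open Scope ring_scope.

Section Sinkhorn.
Variables (R : realType) (n : nat).

Definition entry_pow (lam : R) (M : 'M[R]_n) : 'M[R]_n :=
  \matrix_(i, j) (if M i j == 0 then 0 else powR (M i j) lam).

Definition row_scale (r : 'I_n -> R) (A : 'M[R]_n) : 'M[R]_n :=
  \matrix_(i, j) (A i j * r i / \sum_(k < n) A i k).

Definition col_scale (c : 'I_n -> R) (A : 'M[R]_n) : 'M[R]_n :=
  \matrix_(i, j) (A i j * c j / \sum_(k < n) A k j).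

(* Sinkhorn iterates: S_0 = A, S_1 = rows rescaled, S_2 = columns rescaled, ... *)
Fixpoint sinkhorn_iter (r c : 'I_n -> R) (A : 'M[R]_n) (k : nat) : 'M[R]_n :=
  match k with
  | 0 => A
  | k'.+1 => if odd k' then col_scale c (sinkhorn_iter r c A k')
             else row_scale r (sinkhorn_iter r c A k')
  end.

Definition sinkhorn_limit (r c : 'I_n -> R) (A L : 'M[R]_n) : Prop :=
  forall i j, (fun k => sinkhorn_iter r c A k i j) @ \oo --> L i j.

Definition uniform_marg : 'I_n -> R := fun _ => n%:R^-1.

Definition diag_prod (M : 'M[R]_n) (s : 'S_n) : R := \prod_(i < n) M i (s i).

Definition positive_diagonal (M : 'M[R]_n) (s : 'S_n) : Prop :=
  forall i, 0 < M i (s i).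

Definition leading_diagonal (M : 'M[R]_n) (s : 'S_n) : Prop :=
  forall s' : 'S_n, diag_prod M s' <= diag_prod M s.

End Sinkhorn.

(* For lam > 0 let L be the Sinkhorn limit of A = M^[lam].  Rescaling a row or a
   column multiplies every diagonal product by the same factor, so the cross
   ratios L_p * A_q = L_q * A_p of diagonal products survive in the limit.  Take q
   a leading diagonal tau of M: since L has row sums 1/n, L_tau <= 1 and hence
   L_p <= (M_p / M_tau)^lam.  Conversely, Hall's marriage theorem applied to the
   entries of L of size at least e = L_st / (n^2 + 1) yields a permutation p through
   (s, t) all of whose entries are at least e, so (L_st / (n^2 + 1))^n <= L_p.  If
   (s, t) lies on no leading diagonal then M_p < M_tau for every such p, and the
   bound tends to 0 as lam -> +oo. *)

From mathcomp Require Import all_boot all_order all_algebra all_fingroup.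
From mathcomp Require Import lra zify.
Set Implicit Arguments. Unset Strict Implicit. Unset Printing Implicit Defensive.
Import Order.TTheory GRing.Theory Num.Theory.

Section HallMarriage.
Variables (X Y : finType) (r : X -> Y -> bool).
Implicit Types (A S : {set X}) (B : {set Y}) (f : X -> Y).

Definition neighbours (B : {set Y}) (S : {set X}) : {set Y} :=
  [set y in B | [exists x in S, r x y]].

Definition matching (A : {set X}) (B : {set Y}) (f : X -> Y) : Prop :=
  {in A &, injective f} /\ forall x, x \in A -> f x \in B /\ r x (f x).

Definition hall_condition (A : {set X}) (B : {set Y}) : Prop :=
  forall S, S \subset A -> #|S| <= #|neighbours B S|.

Lemma neighboursP B S y :
  reflect (y \in B /\ exists2 x, x \in S & r x y) (y \in neighbours B S).
Proof.
rewrite inE; apply: (iffP andP) => [[yB /existsP [x /andP [xS rxy]]]|[yB [x xS rxy]]].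
  by split => //; exists x.
by split => //; apply/existsP; exists x; rewrite xS.
Qed.

Lemma neighbours_sub B S : neighbours B S \subset B.
Proof. by apply/subsetP => y /neighboursP []. Qed.

Lemma matching_neighbours A B f : matching A B f -> matching A (neighbours B A) f.
Proof.
move=> [finj fAB]; split => // x xA; have [fxB rxfx] := fAB x xA.
by split => //; apply/neighboursP; split => //; exists x.
Qed.

Lemma matching_glue A S B1 B2 f1 f2 :
  S \subset A -> [disjoint B1 & B2] ->
  matching S B1 f1 -> matching (A :\: S) B2 f2 ->
  matching A (B1 :|: B2) (fun x => if x \in S then f1 x else f2 x).
Proof.
move=> sSA dB [inj1 f1B] [inj2 f2B].
have inAS x : x \in A -> x \notin S -> x \in A :\: S by rewrite inE => -> ->.
have f1B1 x : x \in S -> f1 x \in B1 by case/f1B.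
have f2B2 x : x \in A -> x \notin S -> f2 x \in B2 by move=> xA /(inAS _ xA) /f2B [].
have B12 x x' : x \in S -> x' \in A -> x' \notin S -> f1 x != f2 x'.
  move=> xS x'A x'S; apply/eqP => e.
  by have := disjointFr dB (f1B1 _ xS); rewrite e f2B2.
split.
  move=> x x' xA x'A /=; case: ifPn => xS; case: ifPn => x'S.
  - exact: inj1.
  - by move/eqP; rewrite (negbTE (B12 _ _ xS x'A x'S)).
  - by move/eqP; rewrite eq_sym (negbTE (B12 _ _ x'S xA xS)).
  - by apply: inj2; apply: inAS.
move=> x xA; case: ifPn => xS.
  by have [? ?] := f1B x xS; rewrite inE; split => //; apply/orP; left.
by have [? ?] := f2B x (inAS _ xA xS); rewrite inE; split => //; apply/orP; right.
Qed.

Lemma hall_condition_tight A B S :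
  hall_condition A B -> S \subset A -> #|neighbours B S| = #|S| ->
  hall_condition (A :\: S) (B :\: neighbours B S).
Proof.
move=> hH sSA tight T; rewrite subsetD => /andP [sTA dTS].
have := hH (T :|: S); rewrite subUset sTA sSA cardsU (disjoint_setI0 dTS).
rewrite cards0 subn0 => /(_ isT).
have cover : neighbours B (T :|: S) \subset
    neighbours B S :|: neighbours (B :\: neighbours B S) T.
  apply/subsetP => y /neighboursP [yB [x xTS rxy]].
  rewrite inE; case: (boolP (y \in neighbours B S)) => //= yS.
  apply/neighboursP; split; first by rewrite inE yS.
  exists x => //; move: xTS; rewrite inE => /orP [] // xS.
  by case/negP: yS; apply/neighboursP; split => //; exists x.
by have := subset_leq_card cover; rewrite cardsU; lia.
Qed.

Lemma hall_condition_slack A B x0 y1 : x0 \in A ->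
  (forall S, S \subset A -> S != set0 -> S != A -> #|S| < #|neighbours B S|) ->
  hall_condition (A :\ x0) (B :\ y1).
Proof.
move=> x0A slack T; rewrite subsetD1 => /andP [sTA x0T].
have [->|T0] := eqVneq T set0; first by rewrite cards0.
have TA : T != A by apply: contraNneq x0T => ->.
have cover : neighbours B T \subset y1 |: neighbours (B :\ y1) T.
  apply/subsetP => y /neighboursP [yB [x xT rxy]].
  rewrite in_setU1; case: eqP => //= /eqP yy1; apply/neighboursP.
  by split; [rewrite !inE yy1 | exists x].
have := subset_leq_card cover; have := slack T sTA T0 TA.
rewrite cardsU1; have := leq_b1 (y1 \notin neighbours (B :\ y1) T); lia.
Qed.

Lemma matching0 B f : matching set0 B f.
Proof. by split => [x|x]; rewrite inE. Qed.

(* If some nonempty proper S of A is tight, match S into its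
   neighbours and A :\: S into the remaining vertices; otherwise every such S has a
   spare neighbour, so any edge x0 -- y1 can be used and both endpoints removed. *)
Theorem hall_marriage (y0 : Y) A B : hall_condition A B -> exists f, matching A B f.
Proof.
move: {2}#|A| (leqnn #|A|) => m; elim: m A B => [|m IH] A B leA hH;
  have [->|[x0 x0A]] := set_0Vmem A; try by exists (fun=> y0); apply: matching0.
  by move: leA; rewrite (cardsD1 x0) x0A.
case: (boolP [exists S : {set X},
    [&& S \subset A, S != set0, S != A & #|neighbours B S| == #|S|]]).
  move=> /existsP [S /and4P [sSA S0 SA /eqP tight]].
  have ltSA : #|S| < #|A| by rewrite proper_card // properEneq SA.
  have [f1 m1] := IH S B (leq_trans ltSA leA) (fun T sT => hH T (subset_trans sT sSA)).
  have leAS : #|A :\: S| <= m.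
    by move: leA S0; rewrite cardsD (setIidPr sSA) -card_gt0; lia.
  have [f2 m2] := IH _ _ leAS (hall_condition_tight hH sSA tight).
  exists (fun x => if x \in S then f1 x else f2 x).
  rewrite -(setID B (neighbours B S)) (setIidPr (neighbours_sub B S)).
  apply: matching_glue => //; first by rewrite -setI_eq0 setDE setICA setICr setI0.
  exact: matching_neighbours.
rewrite negb_exists => /forallP tight.
have slack S : S \subset A -> S != set0 -> S != A -> #|S| < #|neighbours B S|.
  move=> sSA S0 SA; have := tight S; rewrite sSA S0 SA /= ltn_neqAle eq_sym => ->.
  exact: hH.
have [y1 /neighboursP [y1B [x]]] : exists y1, y1 \in neighbours B [set x0].
  apply/set0Pn; rewrite -card_gt0.
  by apply: leq_trans (hH _ _); rewrite ?cards1 ?sub1set.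
move/set1P=> -> rx0y1.
have leAx0 : #|A :\ x0| <= m by move: leA; rewrite (cardsD1 x0) x0A.
have [f2 m2] := IH _ _ leAx0 (hall_condition_slack y1 x0A slack).
exists (fun x => if x \in [set x0] then y1 else f2 x).
rewrite -(setD1K y1B); apply: matching_glue.
- by rewrite sub1set.
- by rewrite disjoints1 setD11.
- by split => [z z' /set1P -> /set1P ->|z /set1P ->]; rewrite ?set11.
- exact: m2.
Qed.

End HallMarriage.

Local Open Scope ring_scope.

Lemma ler_sum_subset (R : numDomainType) (I : finType) (P Q : pred I) (F : I -> R) :
  {subset P <= Q} -> (forall i, Q i -> 0 <= F i) ->
  \sum_(i | P i) F i <= \sum_(i | Q i) F i.
Proof.
move=> sPQ F0; rewrite [leRHS](bigID P) /=.
rewrite (eq_bigl P) => [|i]; last first.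
  by case Pi: (P i); rewrite ?andbF ?andbT //; apply: sPQ.
by rewrite lerDl sumr_ge0 // => i /andP [/F0].
Qed.

Lemma ler_sum_term (R : numDomainType) (I : finType) (F : I -> R) j :
  (forall i, 0 <= F i) -> F j <= \sum_i F i.
Proof. by move=> F0; rewrite -(big_pred1_eq +%R); apply: ler_sum_subset. Qed.

Lemma injective_eta_with (T : finType) (f : T -> T) s t :
  {in [set~ s] &, injective f} -> (forall x, x != s -> f x != t) ->
  injective [eta f with s |-> t].
Proof.
move=> finj fst x y /=; case: eqVneq => [->|xs]; case: eqVneq => [->|ys] //.
- by move/esym/eqP; rewrite (negbTE (fst _ ys)).
- by move/eqP; rewrite (negbTE (fst _ xs)).
- by apply: finj; rewrite !inE.
Qed.

Section LargeEntryPermutation.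
Variables (R : realFieldType) (n : nat) (B : 'M[R]_n) (c e : R) (s t : 'I_n).
Hypotheses (B_ge0 : forall i j, 0 <= B i j) (e_ge0 : 0 <= e).
Hypotheses (rowB : forall i, \sum_j B i j = c) (colB : forall j, \sum_i B i j = c).
Hypothesis large_st : e *+ (n * n) < B s t.

Let large i j := e <= B i j.

(* Sum the rows in S column by column: columns in N carry at most c, column t at
   most c - B s t since s is not in S, and every other column less than n e.  So
   #|N| < #|S| would force B s t <= n^2 e. *)
Lemma hall_condition_large_entries : hall_condition large [set~ s] [set~ t].
Proof.
move=> S sS; rewrite leqNgt; apply/negP => ltNS.
set N := neighbours large [set~ t] S in ltNS.
pose F j := \sum_(i in S) B i j.
have c_ge0 : 0 <= c by rewrite -(colB t) sumr_ge0.
have tN : t \notin N by rewrite inE !inE eqxx.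
have F_total : \sum_j F j = c *+ #|S|.
  by rewrite exchange_big /= -sumr_const; apply: eq_bigr => i _; rewrite rowB.
have F_N : \sum_(j in N) F j <= c *+ #|N|.
  rewrite -sumr_const; apply: ler_sum => j _; rewrite -(colB j).
  by apply: ler_sum_subset.
have F_t : F t <= c - B s t.
  rewrite -(colB t) (bigD1 s) //= addrC addrK; apply: ler_sum_subset => // i iS.
  by have := subsetP sS i iS; rewrite !inE.
have F_small j : j \notin N -> j != t -> F j <= e *+ n.
  move=> jN jt; apply: le_trans (_ : \sum_(i in S) e <= _).
    apply: ler_sum => i iS; rewrite leNgt; apply: contra jN => Bij.
    by apply/neighboursP; split; [rewrite !inE | exists i => //; apply: ltW].
  by rewrite sumr_const (ler_wpMn2l e_ge0) // -[leqRHS](card_ord n) max_card.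
have F_rest : \sum_(j | (j \notin N) && (j != t)) F j <= e *+ n *+ n.
  apply: le_trans (_ : \sum_(j | (j \notin N) && (j != t)) e *+ n <= _).
    by apply: ler_sum => j /andP [jN jt]; apply: F_small.
  apply: le_trans (_ : \sum_(j : 'I_n) e *+ n <= _).
    by apply: ler_sum_subset => // j _; rewrite mulrn_wge0.
  by rewrite sumr_const card_ord.
have : c *+ #|S| <= c *+ #|N| + (c - B s t) + e *+ n *+ n.
  rewrite -F_total (bigID (mem N)) /= [X in _ + X](bigD1 t) //= addrA.
  by apply: lerD => //; apply: lerD.
have : c *+ #|N|.+1 <= c *+ #|S| by apply: ler_wpMn2l.
by move: large_st; rewrite mulrSr mulrnA; lra.
Qed.

Lemma perm_large_entries : exists p : 'S_n, p s = t /\ forall i, large i (p i).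
Proof.
have [f [finj fP]] := hall_marriage t hall_condition_large_entries.
have fst x : x != s -> f x != t by move=> xs; have [] := fP x; rewrite ?inE.
have large_st' : large s t.
  apply: ltW (le_lt_trans _ large_st); rewrite -[leLHS]mulr1n (ler_wpMn2l e_ge0) //.
  by rewrite muln_gt0 andbb; apply: leq_ltn_trans (ltn_ord s).
exists (perm (injective_eta_with finj fst)); split => [|i]; rewrite permE /=.
  by rewrite eqxx.
case: eqVneq => [-> //|ni].
by have [] := fP i; rewrite ?inE.
Qed.

End LargeEntryPermutation.

(* Loaded only now: classical_sets reuses finset lemma names such as subsetP. *)
From mathcomp Require Import all_classical all_reals all_analysis.
Import Order.TTheory GRing.Theory Num.Theory numFieldNormedType.Exports.
Local Open Scope classical_set_scope.

Lemma cvg_eq_subseq (R : realType) (u : nat -> R) (phi : nat -> nat) l a :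
  u @ \oo --> l -> (forall k, (k <= phi k)%N) -> (forall k, u (phi k) = a) -> l = a.
Proof.
move=> ul phi_ge ua; have phi_oo : phi @ \oo --> \oo.
  by apply/cvgnyPge => N; apply: filterS (nbhs_infty_ge N) => k /leq_trans; apply.
have : (u \o phi) @ \oo --> l by apply: cvg_comp phi_oo ul.
by under eq_cvg do rewrite /= ua; move/(cvg_unique (@Rhausdorff R) (cvg_cst a)).
Qed.

Lemma cvg0_of_exprn_le (R : realType) (T : Type) (F : set_system T) {FF : Filter F}
    (u v : T -> R) m :
  (0 < m)%N -> (\forall x \near F, 0 <= u x /\ u x ^+ m <= v x) ->
  v @ F --> 0 -> u @ F --> 0.
Proof.
move=> m_gt0 uv /cvgrPdist_lt v0; apply/cvgrPdist_lt => eps eps_gt0.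
have epsm_gt0 : 0 < eps ^+ m by rewrite exprn_gt0.
near=> x; have [u_ge0 le_uv] : 0 <= u x /\ u x ^+ m <= v x by near: x.
have lt_v : `|0 - v x| < eps ^+ m by near: x; apply: v0.
rewrite sub0r normrN ger0_norm // -(ltr_pXn2r m_gt0) ?nnegrE ?(ltW eps_gt0) //.
by apply: le_lt_trans le_uv (le_lt_trans _ lt_v); rewrite sub0r normrN ler_norm.
Unshelve. all: end_near. Qed.

Lemma powR_prod (R : realType) (I : Type) (r : seq I) (P : pred I) (F : I -> R) x :
  (forall i, P i -> 0 <= F i) ->
  (\prod_(i <- r | P i) F i) `^ x = \prod_(i <- r | P i) F i `^ x.
Proof.
move=> F0; elim: r => [|a r IH]; first by rewrite !big_nil powR1.
by rewrite !big_cons; case: ifP => // Pa; rewrite powRM ?IH ?F0 ?prodr_ge0.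
Qed.

Lemma powR_div (R : realType) (a b x : R) : 0 <= a -> 0 < b ->
  (a / b) `^ x = a `^ x / b `^ x.
Proof.
move=> a_ge0 b_gt0; rewrite powRM // ?invr_ge0 ?ltW //; congr (_ * _).
apply: (mulIf (lt0r_neq0 (powR_gt0 x b_gt0))).
by rewrite mulVf ?gt_eqF ?powR_gt0 // -powRM ?invr_ge0 ?ltW // mulVf ?gt_eqF // powR1.
Qed.

Lemma powR_cvgy0 (R : realType) (q : R) : 0 <= q -> q < 1 ->
  q `^ x @[x --> +oo] --> 0.
Proof.
rewrite le_eqVlt => /predU1P [<- _|q_gt0 q_lt1].
  apply: cvg_near_cst; near=> x.
  have x_gt0 : 0 < x by near: x; apply: nbhs_pinfty_gt.
  by rewrite powR0 // gt_eqF.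
have lnq_lt0 : ln q < 0 by rewrite ln_lt0 // q_gt0.
apply/cvgrPdist_lt => eps eps_gt0; near=> x.
rewrite sub0r normrN ger0_norm ?powR_ge0 // /powR gt_eqF //.
rewrite -[ltRHS](lnK (x := eps)) ?posrE // ltr_expR -ltr_ndivrMr //.
by near: x; apply: nbhs_pinfty_gt; apply: num_real.
Unshelve. all: end_near. Qed.

Lemma sum_powR_cvgy0 (R : realType) (I : finType) (P : pred I) (q : I -> R) :
  (forall i, P i -> 0 <= q i < 1) -> \sum_(i | P i) q i `^ x @[x --> +oo] --> 0.
Proof.
move=> q01; suff : \sum_(i | P i) q i `^ x @[x --> +oo] --> \sum_(i | P i) (0 : R).
  by rewrite big1.
apply: cvg_big => [|i /q01 /andP [q_ge0 q_lt1]]; first exact: add_continuous.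
exact: powR_cvgy0.
Qed.

Section DiagonalProducts.
Variables (R : realType) (n : nat).
Implicit Types (X : 'M[R]_n) (p : 'S_n).

Lemma diag_prod_row_scale (r : 'I_n -> R) X p :
  diag_prod (row_scale r X) p = diag_prod X p * \prod_i (r i / \sum_l X i l).
Proof.
by rewrite /diag_prod -big_split; apply: eq_bigr => i _ /=; rewrite mxE mulrA.
Qed.

Lemma diag_prod_col_scale (c : 'I_n -> R) X p :
  diag_prod (col_scale c X) p = diag_prod X p * \prod_j (c j / \sum_l X l j).
Proof.
rewrite [in RHS](reindex_inj (@perm_inj _ p)) /diag_prod -big_split /=.
by apply: eq_bigr => i _; rewrite mxE mulrA.
Qed.

Lemma diag_prod_gt0 X p : positive_diagonal X p -> 0 < diag_prod X p.
Proof. by move=> Xp; apply: prodr_gt0. Qed.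

Lemma diag_prod_le1 X p : (forall i j, 0 <= X i j) ->
  (forall i, \sum_j X i j <= 1) -> diag_prod X p <= 1.
Proof.
move=> X0 rowX; apply: prodr_ile1 => i _; rewrite X0 /=.
exact: le_trans (ler_sum_term _ (X0 i)) (rowX i).
Qed.

Lemma leading_diagonal_exists X : exists p, leading_diagonal X p.
Proof.
exists [arg max_(p > 1%g) diag_prod X p]%O.
by case: arg_maxP => // p _ Hp q; apply: Hp.
Qed.

Lemma diag_prod_lt_leading X tau (s t : 'I_n) p :
  leading_diagonal X tau -> ~ (exists sg, leading_diagonal X sg /\ sg s = t) ->
  p s = t -> diag_prod X p < diag_prod X tau.
Proof.
move=> tau_leading not_leading pst; rewrite ltNge; apply/negP => le_tau.
by apply: not_leading; exists p; split => // q; apply: le_trans (tau_leading q) le_tau.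
Qed.

End DiagonalProducts.

Section SinkhornIterates.
Variables (R : realType) (n : nat) (r c : 'I_n -> R) (A : 'M[R]_n) (s0 : 'S_n).
Hypotheses (A_ge0 : forall i j, 0 <= A i j) (A_s0 : positive_diagonal A s0).
Hypotheses (r_gt0 : forall i, 0 < r i) (c_gt0 : forall j, 0 < c j).

Local Notation S := (sinkhorn_iter r c A).

Lemma sinkhorn_iterS k :
  S k.+1 = if odd k then col_scale c (S k) else row_scale r (S k).
Proof. by []. Qed.

Lemma sinkhorn_iter_ge0 k i j : 0 <= S k i j.
Proof.
elim: k i j => [|k IH] i j /=; first exact: A_ge0.
by case: ifP => _; rewrite mxE divr_ge0 ?sumr_ge0 ?mulr_ge0 // ltW.
Qed.

Lemma sinkhorn_iter_diag_gt0 k : positive_diagonal (S k) s0.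
Proof.
elim: k => [|k IH] i /=; first exact: A_s0.
case: ifP => _; rewrite mxE !divr_gt0 ?mulr_gt0 //.
  by apply: lt_le_trans (IH i) (ler_sum_term _ (sinkhorn_iter_ge0 k ^~ _)).
by apply: lt_le_trans (IH i) (ler_sum_term _ (sinkhorn_iter_ge0 k i)).
Qed.

Lemma sinkhorn_iter_rowsum_gt0 k i : 0 < \sum_j S k i j.
Proof.
apply: lt_le_trans (sinkhorn_iter_diag_gt0 k i) _.
exact: ler_sum_term (sinkhorn_iter_ge0 k i).
Qed.

Lemma sinkhorn_iter_colsum_gt0 k j : 0 < \sum_i S k i j.
Proof.
have := sinkhorn_iter_diag_gt0 k (s0^-1 j)%g; rewrite permKV => Sj.
exact: lt_le_trans Sj (ler_sum_term _ (sinkhorn_iter_ge0 k ^~ j)).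
Qed.

Lemma sinkhorn_iter_rowsum k i : \sum_j S k.*2.+1 i j = r i.
Proof.
rewrite sinkhorn_iterS odd_double; under eq_bigr do rewrite mxE mulrAC.
by rewrite -!mulr_suml mulfV ?mul1r // gt_eqF // sinkhorn_iter_rowsum_gt0.
Qed.

Lemma sinkhorn_iter_colsum k j : \sum_i S k.*2.+2 i j = c j.
Proof.
rewrite sinkhorn_iterS oddS odd_double; under eq_bigr do rewrite mxE mulrAC.
by rewrite -!mulr_suml mulfV ?mul1r // gt_eqF // sinkhorn_iter_colsum_gt0.
Qed.

Lemma sinkhorn_iter_diag_prod k p q :
  diag_prod (S k) p * diag_prod A q = diag_prod (S k) q * diag_prod A p.
Proof.
elim: k => [|k IH] /=; first exact: mulrC.
by case: ifP => _; rewrite ?diag_prod_row_scale ?diag_prod_col_scale mulrAC IH mulrAC.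
Qed.

End SinkhornIterates.

Section SinkhornLimit.
Variables (R : realType) (n : nat) (r c : 'I_n -> R) (A L : 'M[R]_n) (s0 : 'S_n).
Hypothesis AL : sinkhorn_limit r c A L.
Hypotheses (A_ge0 : forall i j, 0 <= A i j) (A_s0 : positive_diagonal A s0).
Hypotheses (r_gt0 : forall i, 0 < r i) (c_gt0 : forall j, 0 < c j).

Local Notation S := (sinkhorn_iter r c A).

Lemma sinkhorn_limit_ge0 i j : 0 <= L i j.
Proof.
by apply: cvgr_to_ge (@AL i j) _; near=> k; apply: sinkhorn_iter_ge0.
Unshelve. all: end_near. Qed.

Lemma sinkhorn_limit_rowsum i : \sum_j L i j = r i.
Proof.
apply: (@cvg_eq_subseq _ (fun k => \sum_j S k i j) (fun k => k.*2.+1)).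
- by apply: cvg_big => //; exact: add_continuous.
- by move=> k; rewrite -addnn; lia.
- by move=> k; apply: sinkhorn_iter_rowsum.
Qed.

Lemma sinkhorn_limit_colsum j : \sum_i L i j = c j.
Proof.
apply: (@cvg_eq_subseq _ (fun k => \sum_i S k i j) (fun k => k.*2.+2)).
- by apply: cvg_big => //; exact: add_continuous.
- by move=> k; rewrite -addnn; lia.
- by move=> k; apply: sinkhorn_iter_colsum.
Qed.

Lemma sinkhorn_limit_diag_prod p q :
  diag_prod L p * diag_prod A q = diag_prod L q * diag_prod A p.
Proof.
apply/eqP; rewrite -subr_eq0; apply/eqP.
apply: (@cvg_eq_subseq _ (fun k => diag_prod (S k) p * diag_prod A q -
    diag_prod (S k) q * diag_prod A p) id) => // [|k]; last first.
  by rewrite sinkhorn_iter_diag_prod // subrr.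
apply: cvgB; (apply: cvgM; last exact: cvg_cst).
all: by apply: cvg_big => // x; apply: mul_continuous.
Qed.

End SinkhornLimit.

Section UniformSinkhornLimit.
Variables (R : realType) (n : nat) (A L : 'M[R]_n) (s0 : 'S_n).
Hypotheses (A_ge0 : forall i j, 0 <= A i j) (A_s0 : positive_diagonal A s0).
Hypothesis AL : sinkhorn_limit (@uniform_marg R n) (@uniform_marg R n) A L.

Lemma uniform_marg_gt0 (i : 'I_n) : 0 < uniform_marg R i.
Proof. by rewrite invr_gt0 ltr0n (leq_ltn_trans _ (ltn_ord i)). Qed.

Lemma uniform_sinkhorn_limit_ge0 i j : 0 <= L i j.
Proof. by apply: sinkhorn_limit_ge0 AL _ _ _ _ _ => //; apply: uniform_marg_gt0. Qed.

Let L_rowsum i : \sum_j L i j = n%:R^-1.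
Proof. by apply: sinkhorn_limit_rowsum AL _ _ _ _ _ => //; apply: uniform_marg_gt0. Qed.

Let L_colsum j : \sum_i L i j = n%:R^-1.
Proof. by apply: sinkhorn_limit_colsum AL _ _ _ _ _ => //; apply: uniform_marg_gt0. Qed.

Lemma uniform_sinkhorn_limit_diag_prod_le tau p : 0 < diag_prod A tau ->
  diag_prod L p <= diag_prod A p / diag_prod A tau.
Proof.
move=> Atau; rewrite ler_pdivlMr // (sinkhorn_limit_diag_prod AL).
rewrite ler_piMl ?prodr_ge0 // diag_prod_le1 // => [|i].
  exact: uniform_sinkhorn_limit_ge0.
by rewrite L_rowsum invf_le1 ?ler1n ?ltr0n (leq_ltn_trans _ (ltn_ord i)).
Qed.

Lemma uniform_sinkhorn_limit_entry_le s t tau : 0 < diag_prod A tau ->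
  (L s t / (n * n).+1%:R) ^+ n <=
    \sum_(p : 'S_n | p s == t) diag_prod A p / diag_prod A tau.
Proof.
move=> Atau; set e := L s t / _.
have term_ge0 q : 0 <= diag_prod A q / diag_prod A tau.
  by rewrite divr_ge0 ?prodr_ge0 // ltW.
have k_gt0 : 0 < (n * n).+1%:R :> R by rewrite ltr0n.
have n_gt0 : (0 < n)%N := leq_ltn_trans (leq0n s) (ltn_ord s).
have [Lst0|Lst_gt0] := eqVneq (L s t) 0.
  by rewrite /e Lst0 mul0r expr0n (gtn_eqF n_gt0) sumr_ge0.
have e_ge0 : 0 <= e by rewrite divr_ge0 ?uniform_sinkhorn_limit_ge0 ?(ltW k_gt0).
have e_small : e *+ (n * n) < L s t.
  rewrite /e -mulr_natr mulrAC ltr_pdivrMr // ltr_pM2l ?ltr_nat //.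
  by rewrite lt_def Lst_gt0 uniform_sinkhorn_limit_ge0.
have [p [pst p_large]] :=
  perm_large_entries uniform_sinkhorn_limit_ge0 e_ge0 L_rowsum L_colsum e_small.
apply: le_trans (_ : diag_prod L p <= _).
  rewrite -[n in e ^+ n]card_ord -prodr_const /diag_prod.
  by apply: ler_prod => i _; rewrite e_ge0 p_large.
apply: le_trans (uniform_sinkhorn_limit_diag_prod_le p Atau) _.
by rewrite (bigD1 p) ?pst ?eqxx //= lerDl sumr_ge0.
Qed.

End UniformSinkhornLimit.

Section EntryPower.
Variables (R : realType) (n : nat) (M : 'M[R]_n) (lam : R).
Hypotheses (M_ge0 : forall i j, 0 <= M i j) (lam_gt0 : 0 < lam).

Lemma entry_powE i j : entry_pow lam M i j = M i j `^ lam.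
Proof. by rewrite mxE; case: eqP => // ->; rewrite powR0 // gt_eqF. Qed.

Lemma entry_pow_ge0 i j : 0 <= entry_pow lam M i j.
Proof. by rewrite entry_powE powR_ge0. Qed.

Lemma positive_diagonal_entry_pow p :
  positive_diagonal M p -> positive_diagonal (entry_pow lam M) p.
Proof. by move=> Mp i; rewrite entry_powE powR_gt0. Qed.

Lemma diag_prod_entry_pow p : diag_prod (entry_pow lam M) p = diag_prod M p `^ lam.
Proof.
rewrite /diag_prod powR_prod => [|i _]; last exact: M_ge0.
by apply: eq_bigr => i _; rewrite entry_powE.
Qed.

Lemma entry_pow_sinkhorn_limit_entry_le (L : 'M[R]_n) s0 tau s t :
  positive_diagonal M s0 -> 0 < diag_prod M tau ->
  sinkhorn_limit (@uniform_marg R n) (@uniform_marg R n) (entry_pow lam M) L ->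
  (L s t / (n * n).+1%:R) ^+ n <=
    \sum_(p : 'S_n | p s == t) (diag_prod M p / diag_prod M tau) `^ lam.
Proof.
move=> M_s0 Mtau_gt0 AL; have A_s0 := positive_diagonal_entry_pow M_s0.
apply: le_trans
  (uniform_sinkhorn_limit_entry_le entry_pow_ge0 A_s0 AL s t (tau := tau) _) _.
  by rewrite diag_prod_entry_pow powR_gt0.
by apply: ler_sum => p _; rewrite !diag_prod_entry_pow powR_div ?prodr_ge0.
Qed.

End EntryPower.

Theorem proposition5 (R : realType) (n : nat) (M : 'M[R]_n)
  (Mlim : R -> 'M[R]_n) :
  (forall i j, 0 <= M i j) ->
  (exists s : 'S_n, positive_diagonal M s) ->
  (forall lam : R, 0 < lam ->
     sinkhorn_limit (@uniform_marg R n) (@uniform_marg R n)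
       (entry_pow lam M) (Mlim lam)) ->
  forall s t : 'I_n,
    ~ (exists sg : 'S_n, leading_diagonal M sg /\ sg s = t) ->
    (fun lam => Mlim lam s t) @ +oo --> (0 : R).
Proof.
move=> M_ge0 [s0 M_s0] Mlim_lim s t not_leading.
have [tau tau_leading] := leading_diagonal_exists M.
have Mtau_gt0 : 0 < diag_prod M tau.
  exact: lt_le_trans (diag_prod_gt0 M_s0) (tau_leading s0).
pose k : R := (n * n).+1%:R; have k_gt0 : 0 < k by rewrite ltr0n.
suff Mlim_k : (fun lam => Mlim lam s t / k) @ +oo --> 0.
  rewrite -(mul0r k); under eq_fun do rewrite -(divfK (lt0r_neq0 k_gt0) (Mlim _ s t)).
  exact: cvgM Mlim_k (cvg_cst k).
pose v lam := \sum_(p : 'S_n | p s == t) (diag_prod M p / diag_prod M tau) `^ lam.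
apply: (@cvg0_of_exprn_le _ _ _ _ _ v n).
- exact: leq_ltn_trans (leq0n s) (ltn_ord s).
- near=> lam; have lam_gt0 : 0 < lam by near: lam; apply: nbhs_pinfty_gt.
  have AL := Mlim_lim lam lam_gt0; split.
    rewrite divr_ge0 ?(ltW k_gt0) //.
    exact: uniform_sinkhorn_limit_ge0 (entry_pow_ge0 M lam_gt0) AL _ _.
  exact: entry_pow_sinkhorn_limit_entry_le.
- apply: sum_powR_cvgy0 => p /eqP pst.
  rewrite divr_ge0 ?prodr_ge0 ?(ltW Mtau_gt0) // ltr_pdivrMr // mul1r.
  exact: diag_prod_lt_leading pst.
Unshelve. all: end_near. Qed.
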